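(* For every $n\in\mathbb N$, Thompson's group $T$ acts transitively, via $t\cdot x=\iota(t)(x)$, on the set $\Lambda_n$ of $n$-tuples $(x_1,\ldots,x_n)$ of pairwise distinct elements of $Z$ which are cyclically ordered with respect to $\le_{\rm lex}$ (i.e. some cyclic rotation $(x_k,\ldots,x_n,x_1,\ldots,x_{k-1})$ is strictly $\le_{\rm lex}$-increasing).
   Context: Let $\{0,1\}^*$ be the finite words over $\{0,1\}$ (empty word $\varepsilon$) and $Z=\{0,1\}^*\cup\{\zeta\}$ for an extra symbol $\zeta$. Order $Z$ by $\le_{\rm lex}$: for words $x,y$ append the infinite string $\tfrac12\tfrac12\cdots$ and compare lexicographically with $0<\tfrac12<1$; $\zeta$ is larger than all words. A finite rooted binary subtree is a finite prefix-closed set of words containing $\varepsilon$ in which each element has both or neither of its children $x0,x1$; leaves are elements with no children, nodes the others; for such $R$ let $b_R:\mathrm{nodes}(R)\cup\{\zeta\}\to\mathrm{leaves}(R)$ be the unique $\le_{\rm lex}$-preserving bijection. Thompson's group $T$ is the group of homeomorphisms $v$ of $\{0,1\}^{\mathbb N}$ for which there are finite rooted binary subtrees $L,R$ with leaves $\ell_1<_{\rm lex}\cdots<_{\rm lex}\ell_k$, $r_1<_{\rm lex}\cdots<_{\rm lex}r_k$, and a cyclic shift $f(\ell_i)=r_{i+c \bmod k}$, such that $v(\ell\omega)=f(\ell)\omega$. Define the bijection $\iota(v)$ of $Z$ by $\iota(v)(x)=b_R^{-1}(f(b_L(x)))$ for $x\in\mathrm{nodes}(L)\cup\{\zeta\}$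 and $\iota(v)(\ell s)=f(\ell)s$ for $\ell\in\mathrm{leaves}(L)$, $s\in\{0,1\}^*$; this is independent of the choice of $(L,R,f)$ and defines an action of $T$ on $Z$. *)

From mathcomp Require Import all_boot.
Set Implicit Arguments. Unset Strict Implicit. Unset Printing Implicit Defensive.

(* Words over {0,1}: seq bool (false = 0, true = 1); x0 / x1 = rcons x false / true. *)
Definition word := seq bool.

(* Z = {0,1}^* ∪ {ζ}:  Some w is the word w, None is ζ. *)
Definition Z := option word.
Definition zeta : Z := None.

(* Strict lex order on words, after padding with 1/2 1/2 ..., 0 < 1/2 < 1. *)
Fixpoint lexlt (x y : word) : bool :=
  match x, y with
  | [::], [::] => false
  | [::], b :: _ => b
  | a :: _, [::] => ~~ a
  | a :: x', b :: y' => if a == b then lexlt x' y' else (~~ a) && b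
  end.
Definition lexle (x y : word) : bool := lexlt x y || (x == y).

Definition ltZ (x y : Z) : bool :=
  match x, y with
  | Some a, Some b => lexlt a b
  | Some _, None => true
  | None, _ => false
  end.

Definition is_tree (R : seq word) : Prop :=
  [::] \in R /\
  (forall (x : word) (b : bool), rcons x b \in R -> x \in R) /\
  (forall x : word, x \in R -> (rcons x false \in R) = (rcons x true \in R)).

Definition leaves (R : seq word) : seq word :=
  sort lexle (undup [seq x <- R | rcons x false \notin R]).
Definition nodes (R : seq word) : seq word :=
  sort lexle (undup [seq x <- R | rcons x false \in R]).

Definition nodesZ (R : seq word) : seq Z := map Some (nodes R) ++ [:: zeta].

(* b_R : nodes(R) ∪ {ζ} -> leaves(R), the order preserving bijection, and its inverse. *)
Definition bmap (R : seq word) (z : Z) : word := nth [::] (leaves R) (index z (nodesZ R)).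
Definition bmap_inv (R : seq word) (l : word) : Z := nth zeta (nodesZ R) (index l (leaves R)).

(* Data (L, R, c) of an element of T: f(l_i) = r_{(i + c) mod k}. *)
Definition tree_pair (L R : seq word) : Prop :=
  is_tree L /\ is_tree R /\ size (leaves L) = size (leaves R).

Definition fmap (L R : seq word) (c : nat) (l : word) : word :=
  nth [::] (leaves R) ((index l (leaves L) + c) %% size (leaves L)).

(* The leaf of L that is a prefix of w (w not a node of L). *)
Definition leaf_prefix (L : seq word) (w : word) : word :=
  nth [::] (leaves L) (find (fun l => prefix l w) (leaves L)).

(* The element v of T given by (L,R,c), acting on Cantor space: v(l ω) = f(l) ω. *)
Definition thompson_hom (L R : seq word) (c : nat) (om : nat -> bool) : nat -> bool :=
  let l := leaf_prefix L (mkseq om (\max_(u <- L) size u).+1) in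
  let r := fmap L R c l in
  fun i => if i < size r then nth false r i else om (i - size r + size l).

Definition iotaT (L R : seq word) (c : nat) (z : Z) : Z :=
  match z with
  | None => bmap_inv R (fmap L R c (bmap L None))
  | Some w =>
      if (w \in L) && (rcons w false \in L) then
        bmap_inv R (fmap L R c (bmap L (Some w)))
      else
        let l := leaf_prefix L w in Some (fmap L R c l ++ drop (size l) w)
  end.

Definition Lambda (n : nat) (x : seq Z) : Prop :=
  size x = n /\ uniq x /\ exists k : nat, sorted ltZ (rot k x).

From mathcomp Require Import all_boot zify.
Set Implicit Arguments. Unset Strict Implicit. Unset Printing Implicit Defensive.

(* On nodes(L) ∪ {ζ} the map ι(v) is b_R^-1 ∘ f ∘ b_L, i.e. it sends the i-th
   element of nodes(L) ∪ {ζ} (in lex order) to the (i + c mod k)-th element of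
   nodes(R) ∪ {ζ}.  Every finite subset of Z lies in nodes(R) ∪ {ζ} for a
   complete tree R, and grafting combs onto leaves inserts any number of new
   nodes at any place of this lex-ordered list.  Inserting suitably many nodes
   in the gaps puts a cyclically ordered n-tuple at the positions i·G + a
   (mod nG).  Doing this for both tuples with the same G, the cyclic shift by
   the difference of the offsets maps one tuple onto the other. *)

Lemma lexlt_irr (x : word) : lexlt x x = false.
Proof. by elim: x => [|a x IH] //=; rewrite eqxx. Qed.

Lemma lexlt_trans : transitive lexlt.
Proof.
move=> y x z; elim: x y z => [|a x IH] [|b y] [|c z] //=;
  repeat match goal with b : bool |- _ => case: b end => //=.
all: exact: IH.
Qed.

Lemma lexlt_total (x y : word) : x != y -> lexlt x y || lexlt y x.
Proof.
elim: x y => [|a x IH] [|b y] //=; first by case: b.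
  by case: a.
by case: a; case: b => //= ne; apply: IH; apply: contra ne => /eqP ->.
Qed.

Lemma lexle_trans : transitive lexle.
Proof.
move=> y x z; rewrite /lexle => /orP[h1|/eqP->] /orP[h2|/eqP<-].
- by rewrite (lexlt_trans h1 h2).
- by rewrite h1.
- by rewrite h2.
- by rewrite eqxx orbT.
Qed.

Lemma lexle_anti : antisymmetric lexle.
Proof.
move=> x y; rewrite /lexle => /andP[/orP[h1|/eqP//] /orP[h2|/eqP//]].
by have := lexlt_trans h1 h2; rewrite lexlt_irr.
Qed.

Lemma lexle_total : total lexle.
Proof.
move=> x y; case: (eqVneq x y) => [->|ne]; first by rewrite /lexle eqxx orbT.
by rewrite /lexle; case/orP: (lexlt_total ne) => ->; rewrite ?orbT.
Qed.

Lemma ltZ_trans : transitive ltZ.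
Proof. by move=> [y|] [x|] [z|] //=; apply: lexlt_trans. Qed.

Lemma ltZ_irr : irreflexive ltZ.
Proof. by move=> [x|] //=; rewrite lexlt_irr. Qed.

Lemma sorted_ltZ_index (s : seq Z) a b :
  sorted ltZ s -> a \in s -> b \in s -> ltZ a b -> index a s < index b s.
Proof.
move=> ss sa sb ab; case: ltngtP => // [ba|eq_ab].
- by have := ltZ_trans ab (sorted_ltn_index ltZ_trans ss b a sb sa ba); rewrite ltZ_irr.
- by move: ab; rewrite -(nth_index zeta sa) -(nth_index zeta sb) eq_ab ltZ_irr.
Qed.

Inductive btree := Leaf | Node of btree & btree.

(* The casts keep every list at type [seq word] rather than [seq (seq bool)],
   so that [lia] sees a single atom for each [size (btree_leaves _)]. *)

Fixpoint btree_elems (t : btree) : seq word :=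
  match t with
  | Leaf => [:: [::]]
  | Node a b => [::] :: map (cons false : word -> word) (btree_elems a)
                     ++ map (cons true : word -> word) (btree_elems b)
  end.

Fixpoint btree_nodes (t : btree) : seq word :=
  match t with
  | Leaf => [::]
  | Node a b => map (cons false : word -> word) (btree_nodes a)
                ++ [::] :: map (cons true : word -> word) (btree_nodes b)
  end.

Fixpoint btree_leaves (t : btree) : seq word :=
  match t with
  | Leaf => [:: [::]]
  | Node a b => map (cons false : word -> word) (btree_leaves a)
                ++ map (cons true : word -> word) (btree_leaves b)
  end.

Definition btree_nodesZ (t : btree) : seq Z := map Some (btree_nodes t) ++ [:: zeta].

Lemma mem_map_cons (a b : bool) (u : word) (s : seq word) :
  (a :: u \in map (cons b) s) = (a == b) && (u \in s).
Proof.
apply/mapP/andP => [[v vs [-> ->]]|[/eqP -> us]]; first by rewrite eqxx.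
by exists u.
Qed.

Lemma nil_notin_map_cons (b : bool) (s : seq word) : ([::] : word) \in map (cons b) s = false.
Proof. by apply/mapP => -[]. Qed.

Lemma nil_btree_elems t : [::] \in btree_elems t.
Proof. by case: t. Qed.

Lemma btree_elems_prefix t x b : rcons x b \in btree_elems t -> x \in btree_elems t.
Proof.
elim: t x => [|l IHl r IHr] [|a x] //=; rewrite ?inE // !mem_cat !mem_map_cons.
by case: a; rewrite /= ?andbF ?orbF; [apply: IHr | apply: IHl].
Qed.

Lemma btree_elems_child t x : x \in btree_elems t ->
  (rcons x false \in btree_elems t) = (rcons x true \in btree_elems t).
Proof.
elim: t x => [|l IHl r IHr] [|a x] //=; rewrite ?inE //= !mem_cat !mem_map_cons.
  by rewrite /= !nil_btree_elems.
by case: a; rewrite /= ?andbF ?orbF ?andbT; [apply: IHr | apply: IHl].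
Qed.

Lemma is_tree_btree t : is_tree (btree_elems t).
Proof.
split; first exact: nil_btree_elems.
by split; [exact: btree_elems_prefix | exact: btree_elems_child].
Qed.

Lemma mem_btree_nodes t x :
  (x \in btree_nodes t) = (x \in btree_elems t) && (rcons x false \in btree_elems t).
Proof.
elim: t x => [|l IHl r IHr] [|a x] //=;
  rewrite ?inE ?mem_cat ?inE ?nil_notin_map_cons ?mem_map_cons /= ?nil_btree_elems //.
by case: a; rewrite /= ?andbF ?orbF.
Qed.

Lemma mem_btree_leaves t x :
  (x \in btree_leaves t) = (x \in btree_elems t) && (rcons x false \notin btree_elems t).
Proof.
elim: t x => [|l IHl r IHr] [|a x] //=;
  rewrite ?inE ?mem_cat ?inE ?nil_notin_map_cons ?mem_map_cons /= ?nil_btree_elems //.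
by case: a; rewrite /= ?andbF ?orbF.
Qed.

Lemma pairwise_lexlt_map_cons (b : bool) (s : seq word) :
  pairwise lexlt (map (cons b) s) = pairwise lexlt s.
Proof. by rewrite pairwise_map; apply: eq_pairwise => u v /=; rewrite eqxx. Qed.

Lemma sorted_btree_nodes t : sorted lexlt (btree_nodes t).
Proof.
rewrite sorted_pairwise; last exact: lexlt_trans.
elim: t => [|l IHl r IHr] //=.
rewrite pairwise_cat /= !pairwise_lexlt_map_cons IHl IHr /= !andbT.
apply/andP; split; last by apply/allP => v /mapP[w _ ->].
rewrite allrel_mapl; apply/allrelP => u v _ /=.
by rewrite inE => /orP[/eqP->|/mapP[w _ ->]].
Qed.

Lemma sorted_btree_leaves t : sorted lexlt (btree_leaves t).
Proof.
rewrite sorted_pairwise; last exact: lexlt_trans.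
elim: t => [|l IHl r IHr] //=.
rewrite pairwise_cat !pairwise_lexlt_map_cons IHl IHr /=.
by rewrite andbT allrel_mapl allrel_mapr; apply/allrelP.
Qed.

Lemma sorted_btree_nodesZ t : sorted ltZ (btree_nodesZ t).
Proof.
rewrite sorted_pairwise; last exact: ltZ_trans.
rewrite pairwise_cat pairwise_map /= andbT -sorted_pairwise; last exact: lexlt_trans.
rewrite sorted_btree_nodes andbT allrel_mapl.
by apply/allrelP => u v _; rewrite inE => /eqP ->.
Qed.

Lemma uniq_btree_leaves t : uniq (btree_leaves t).
Proof.
by apply: sorted_uniq (sorted_btree_leaves t); [exact: lexlt_trans | exact: lexlt_irr].
Qed.

Lemma uniq_btree_nodesZ t : uniq (btree_nodesZ t).
Proof. by apply: sorted_uniq (sorted_btree_nodesZ t); [exact: ltZ_trans | exact: ltZ_irr]. Qed.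

Lemma sort_lexle_eq (s r : seq word) :
  sorted lexlt r -> s =i r -> sort lexle (undup s) = r.
Proof.
move=> sr sr_eq; apply: (sorted_eq lexle_trans lexle_anti).
- exact: sort_sorted lexle_total _.
- by apply: sub_sorted sr => u v uv; rewrite /lexle uv.
rewrite perm_sort; apply: uniq_perm; first exact: undup_uniq.
  by apply: sorted_uniq sr; [exact: lexlt_trans | exact: lexlt_irr].
by move=> u; rewrite mem_undup sr_eq.
Qed.

Lemma nodes_btree t : nodes (btree_elems t) = btree_nodes t.
Proof.
apply: sort_lexle_eq; first exact: sorted_btree_nodes.
by move=> u; rewrite mem_filter mem_btree_nodes andbC.
Qed.

Lemma leaves_btree t : leaves (btree_elems t) = btree_leaves t.
Proof.
apply: sort_lexle_eq; first exact: sorted_btree_leaves.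
by move=> u; rewrite mem_filter mem_btree_leaves andbC.
Qed.

Lemma size_btree_leaves t : size (btree_leaves t) = (size (btree_nodes t)).+1.
Proof.
elim: t => [|l IHl r IHr] //=.
by rewrite !size_cat /= !size_map IHl IHr addSn addnS.
Qed.

Lemma size_btree_nodesZ t : size (btree_nodesZ t) = size (btree_leaves t).
Proof. by rewrite size_cat size_map addn1 size_btree_leaves. Qed.

Lemma iotaT_btree tL tR c z :
  size (btree_leaves tL) = size (btree_leaves tR) -> z \in btree_nodesZ tL ->
  iotaT (btree_elems tL) (btree_elems tR) c z =
  nth zeta (btree_nodesZ tR) ((index z (btree_nodesZ tL) + c) %% size (btree_leaves tL)).
Proof.
move=> eq_size zL.
have zi : index z (btree_nodesZ tL) < size (btree_leaves tL).
  by rewrite -size_btree_nodesZ index_mem.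
have bmap_z :
    bmap (btree_elems tL) z = nth [::] (btree_leaves tL) (index z (btree_nodesZ tL)).
  by rewrite /bmap leaves_btree /nodesZ nodes_btree.
have shift_leaf i : i < size (btree_leaves tL) ->
    bmap_inv (btree_elems tR)
      (fmap (btree_elems tL) (btree_elems tR) c (nth [::] (btree_leaves tL) i)) =
    nth zeta (btree_nodesZ tR) ((i + c) %% size (btree_leaves tL)).
  move=> iL; rewrite /bmap_inv /fmap !leaves_btree /nodesZ nodes_btree.
  rewrite index_uniq ?uniq_btree_leaves // index_uniq ?uniq_btree_leaves //.
  by rewrite -eq_size ltn_pmod // (leq_ltn_trans _ iL).
case: z zL zi bmap_z => [w|] zL zi bmap_z /=; last by rewrite bmap_z shift_leaf.
move: zL; rewrite mem_cat inE orbF (mem_map (@Some_inj _)) mem_btree_nodes => ->.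
by rewrite bmap_z shift_leaf.
Qed.

Definition insert_at (T : Type) (j : nat) (C s : seq T) : seq T :=
  take j s ++ C ++ drop j s.

Lemma insert_at_catl (T : Type) j (C s s' : seq T) : j <= size s ->
  insert_at j C s ++ s' = insert_at j C (s ++ s').
Proof.
rewrite /insert_at take_cat drop_cat leq_eqVlt => /orP[/eqP->|->]; last by rewrite !catA.
by rewrite ltnn subnn take0 drop0 take_size drop_size cats0 -!catA.
Qed.

Lemma insert_at_catr (T : Type) j (C s s' : seq T) : size s <= j ->
  s ++ insert_at (j - size s) C s' = insert_at j C (s ++ s').
Proof.
by move=> sj; rewrite /insert_at take_cat drop_cat ltnNge sj /= !catA.
Qed.

Lemma map_insert_at (T U : Type) (f : T -> U) j (C s : seq T) :
  map f (insert_at j C s) = insert_at j (map f C) (map f s).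
Proof. by rewrite /insert_at !map_cat map_take map_drop. Qed.

Lemma mem_insert_at (T : eqType) j (C s : seq T) x :
  (x \in insert_at j C s) = (x \in C) || (x \in s).
Proof. by rewrite /insert_at !mem_cat orbCA -mem_cat cat_take_drop. Qed.

Lemma index_insert_at (T : eqType) j (C s : seq T) z :
  uniq (insert_at j C s) -> z \in s ->
  index z (insert_at j C s) = if index z s < j then index z s else index z s + size C.
Proof.
rewrite /insert_at -[in index z s](cat_take_drop j s) => u zs.
have [zt|zt] := boolP (z \in take j s).
  have zj : index z (take j s) < j.
    by apply: leq_trans (geq_minl j (size s)); rewrite -size_take_min index_mem.
  by rewrite !index_cat zt zj.
have zd : z \in drop j s by rewrite -(cat_take_drop j s) mem_cat (negbTE zt) in zs.
have zC : z \notin C.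
  move: u; rewrite cat_uniq => /and3P[_ _]; rewrite cat_uniq => /and3P[_ + _].
  by apply: contra => zC; apply/hasP; exists z.
have sj : size (take j s) = j.
  have : 0 < size (drop j s) by case: (drop j s) zd.
  by rewrite size_take_min size_drop; lia.
rewrite !index_cat (negbTE zt) (negbTE zC) sj ltnNge leq_addr /=; lia.
Qed.

Fixpoint comb (m : nat) : btree :=
  if m is m'.+1 then Node Leaf (comb m') else Leaf.

Lemma size_btree_nodes_comb m : size (btree_nodes (comb m)) = m.
Proof. by elim: m => //= m IH; rewrite size_map IH. Qed.

(* The nodes of [graft t j m] that are not in [t] come lex-after the nodes of
   [t] to the left of its [j]-th leaf and lex-before all the others, hence they
   are inserted just before the [j]-th element of [btree_nodesZ t]. *)
Fixpoint graft (t : btree) (j m : nat) : btree :=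
  match t with
  | Leaf => comb m
  | Node a b => if j < size (btree_leaves a) then Node (graft a j m) b
                else Node a (graft b (j - size (btree_leaves a)) m)
  end.

Lemma size_btree_leaves_graft t j m :
  size (btree_leaves (graft t j m)) = size (btree_leaves t) + m.
Proof.
elim: t j => [|a IHa b IHb] j /=.
  by rewrite size_btree_leaves size_btree_nodes_comb add1n.
by case: ifP => _ /=; rewrite !size_cat !size_map ?IHa ?IHb; [exact: addnAC | exact: addnA].
Qed.

Lemma btree_nodes_graft t j m : j < size (btree_leaves t) ->
  exists C, size C = m /\ btree_nodes (graft t j m) = insert_at j C (btree_nodes t).
Proof.
elim: t j => [|a IHa b IHb] j /=.
  by exists (btree_nodes (comb m)); rewrite size_btree_nodes_comb /insert_at cats0.
rewrite size_cat !size_map => jab; case: ifP => [ja|/negbT ja] /=.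
- have [C [sC ->]] := IHa j ja.
  exists (map (cons false) C); rewrite size_map sC; split => //.
  rewrite map_insert_at insert_at_catl // size_map -ltnS -size_btree_leaves //.
- have jb : j - size (btree_leaves a) < size (btree_leaves b) by lia.
  have [C [sC ->]] := IHb _ jb.
  exists (map (cons true) C); rewrite size_map sC; split => //.
  have sa : size (rcons (map (cons false : word -> word) (btree_nodes a)) [::])
            = size (btree_leaves a).
    by rewrite size_rcons size_map size_btree_leaves.
  by rewrite map_insert_at -cat_rcons -[in RHS]cat_rcons -insert_at_catr sa // leqNgt.
Qed.

Lemma btree_nodesZ_graft t j m : j < size (btree_leaves t) ->
  exists C, size C = m /\ btree_nodesZ (graft t j m) = insert_at j C (btree_nodesZ t).
Proof.
move=> jt; have [C [sC nodes_eq]] := btree_nodes_graft m jt.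
exists (map Some C); rewrite size_map sC; split => //.
rewrite /btree_nodesZ nodes_eq map_insert_at insert_at_catl //.
by rewrite size_map -ltnS -size_btree_leaves.
Qed.

Lemma index_btree_nodesZ_graft t j m z :
  j < size (btree_leaves t) -> z \in btree_nodesZ t ->
  z \in btree_nodesZ (graft t j m) /\
  index z (btree_nodesZ (graft t j m)) =
    if index z (btree_nodesZ t) < j then index z (btree_nodesZ t)
    else index z (btree_nodesZ t) + m.
Proof.
move=> jt zt; have [C [sC eq_graft]] := btree_nodesZ_graft m jt.
split; first by rewrite eq_graft mem_insert_at zt orbT.
by rewrite eq_graft index_insert_at -?eq_graft ?uniq_btree_nodesZ ?sC.
Qed.

Lemma btree_shift_upto J t (d : nat -> nat) :
  J < size (btree_leaves t) -> {homo d : a b / a <= b} ->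
  (forall p, J <= p -> d p = d J) ->
  exists t', size (btree_leaves t') = size (btree_leaves t) + d J /\
    forall z, z \in btree_nodesZ t -> z \in btree_nodesZ t' /\
      index z (btree_nodesZ t') = index z (btree_nodesZ t) + d (index z (btree_nodesZ t)).
Proof.
elim: J t d => [|J IH] t d Jt d_homo d_const.
  exists (graft t 0 (d 0)); rewrite size_btree_leaves_graft; split=> // z zt.
  by have [-> ->] := index_btree_nodesZ_graft (d 0) Jt zt; rewrite d_const.
(* Grafting [d J.+1 - d J] nodes at leaf [J.+1] shifts exactly the indices
   above [J]; the induction hypothesis handles [d] truncated at [J]. *)
pose t1 := graft t J.+1 (d J.+1 - d J).
have dJ := d_homo _ _ (leqnSn J).
have Jt1 : J < size (btree_leaves t1) by rewrite size_btree_leaves_graft; lia.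
have [|p J_p|t' [size_t' index_t']] := IH t1 (fun p => d (minn p J)) Jt1.
- by move=> a b ab; apply: d_homo; lia.
- by rewrite minnn (minn_idPr J_p).
exists t'; split=> [|z zt]; first by rewrite size_t' size_btree_leaves_graft minnn; lia.
have [zt1 index_t1] := index_btree_nodesZ_graft (d J.+1 - d J) Jt zt.
have [-> ->] := index_t' z zt1; split=> //; rewrite index_t1.
case: ltnP => [zJ|Jz]; first by rewrite (minn_idPl _).
rewrite (d_const _ Jz) (minn_idPr _); lia.
Qed.

Lemma btree_shift t (d : nat -> nat) : {homo d : a b / a <= b} ->
  exists t', size (btree_leaves t') = size (btree_leaves t) + d (size (btree_leaves t)).-1 /\
    forall z, z \in btree_nodesZ t -> z \in btree_nodesZ t' /\
      index z (btree_nodesZ t') = index z (btree_nodesZ t) + d (index z (btree_nodesZ t)).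
Proof.
move=> d_homo; set K := size (btree_leaves t).
have K_pos : K.-1 < K by rewrite ltn_predL /K size_btree_leaves.
have [|p Kp|t' [size_t' index_t']] :=
  @btree_shift_upto K.-1 t (fun p => d (minn p K.-1)) K_pos.
- by move=> a b ab; apply: d_homo; lia.
- by rewrite minnn (minn_idPr Kp).
exists t'; split=> [|z zt]; first by rewrite size_t' minnn.
have [-> ->] := index_t' z zt; split=> //; rewrite (minn_idPl _) //.
by rewrite -ltnS (ltn_predK K_pos) /K -size_btree_nodesZ index_mem.
Qed.

Lemma monotone_interpolation n (p f : nat -> nat) :
  (forall t u, t < u < n -> p t < p u) -> (forall t u, t <= u < n -> f t <= f u) ->
  exists d : nat -> nat, [/\ {homo d : a b / a <= b},
    forall t, t < n -> d (p t) = f t & forall q, d q <= f n.-1].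
Proof.
move=> p_mono f_homo; exists (fun q => \max_(u < n | p u <= q) f u); split.
- move=> a b ab; apply/bigmax_leqP => u pu; apply: leq_bigmax_cond.
  exact: leq_trans pu ab.
- move=> t tn; apply/eqP; rewrite eqn_leq; apply/andP; split.
    apply/bigmax_leqP => u pu; apply: f_homo; rewrite tn andbT leqNgt.
    by apply/negP => tu; have := p_mono t u; rewrite tu ltn_ord => /(_ isT); lia.
  exact: (leq_bigmax_cond (P := fun u : 'I_n => p u <= p t)
                          (F := fun u : 'I_n => f u) (Ordinal tn)).
- by move=> q; apply/bigmax_leqP => u _; apply: f_homo; have := ltn_ord u; lia.
Qed.

Lemma btree_spread t0 (s : seq Z) :
  sorted ltZ s -> {subset s <= btree_nodesZ t0} -> 0 < size s ->
  exists t b, [/\ b < size (btree_leaves t0),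
    size (btree_leaves t) = size s * size (btree_leaves t0) &
    forall i, i < size s -> nth zeta s i \in btree_nodesZ t /\
      index (nth zeta s i) (btree_nodesZ t) = i * size (btree_leaves t0) + b].
Proof.
move=> s_sorted s_t0 s_gt0; set n := size s; set G := size (btree_leaves t0).
pose p i := index (nth zeta s i) (btree_nodesZ t0).
have nth_t0 i : i < n -> nth zeta s i \in btree_nodesZ t0 by move=> i_n; apply/s_t0/mem_nth.
have pG i : i < n -> p i < G by move=> i_n; rewrite /G -size_btree_nodesZ index_mem nth_t0.
have p_mono t u : t < u < n -> p t < p u.
  case/andP=> tu un; have tn := ltn_trans tu un.
  apply: sorted_ltZ_index; rewrite ?nth_t0 ?sorted_btree_nodesZ //.
  by apply: (sorted_ltn_nth ltZ_trans zeta s_sorted).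
have n_pos : n.-1 < n by rewrite ltn_predL.
set b := p n.-1.
have pb i : i < n -> p i <= b.
  move=> i_n; case: (ltngtP i n.-1) => [i_lt|i_gt|-> //]; last by lia.
  by apply: ltnW; apply: p_mono; rewrite i_lt.
(* [f] is nondecreasing because the gaps [p u - p t] are smaller than [G]. *)
pose f u := u * G + b - p u.
have f_homo t u : t <= u < n -> f t <= f u.
  case/andP; rewrite leq_eqVlt => /orP[/eqP-> //|tu] un.
  have : t.+1 * G <= u * G by rewrite leq_mul2r tu orbT.
  have := pG u un; have := pb u un; have := pb t (ltn_trans tu un); rewrite /f mulSn; lia.
have [d [d_homo d_p d_max]] := monotone_interpolation p_mono f_homo.
have [t [size_t index_t]] := btree_shift t0 d_homo.
exists t, b; split=> [||i i_n]; first exact: pG.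
  have : d b <= d G.-1 by apply: d_homo; have := pG _ n_pos; rewrite /b; lia.
  have := d_max G.-1; rewrite d_p // /f -/b size_t -/G addnK => ub lb.
  by rewrite (@anti_leq (d G.-1) (n.-1 * G)) ?ub ?lb // -mulSn prednK.
have [-> ->] := index_t _ (nth_t0 i i_n); split=> //; rewrite -/(p i) d_p // /f.
by have := pb i i_n; lia.
Qed.

Fixpoint complete (N : nat) : btree :=
  if N is N'.+1 then Node (complete N') (complete N') else Leaf.

Lemma mem_btree_nodes_complete N (w : word) : (w \in btree_nodes (complete N)) = (size w < N).
Proof.
elim: N w => [|N IH] [|a w] //=;
  rewrite ?mem_cat ?inE ?nil_notin_map_cons ?mem_map_cons //=.
by case: a; rewrite /= ?andbF ?orbF IH.
Qed.

Lemma btree_nodesZ_cover (s : seq Z) : exists t, {subset s <= btree_nodesZ t}.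
Proof.
exists (complete (\max_(z <- s) (if z is Some w then size w else 0)).+1).
move=> [w|] zs; rewrite mem_cat ?mem_head ?orbT //; apply/orP; left.
rewrite (mem_map (@Some_inj _)) mem_btree_nodes_complete ltnS.
exact: (@leq_bigmax_seq _ s xpredT
          (fun z : Z => if z is Some w then size w else 0) (Some w) zs isT).
Qed.

Lemma nth_rot (T : Type) (x0 : T) (s : seq T) k i :
  k <= size s -> i < size s -> nth x0 (rot k s) i = nth x0 s ((i + k) %% size s).
Proof.
move=> k_s i_s; rewrite /rot nth_cat size_drop.
case: ltnP => i_k.
  by rewrite nth_drop modn_small 1?addnC //; lia.
rewrite nth_take; last by lia.
have -> : i + k = 1 * size s + (i - (size s - k)) by lia.
by rewrite modnMDl modn_small //; lia.
Qed.

Lemma Lambda_sorted_rot n x : Lambda n x -> exists2 k, k <= n & sorted ltZ (rot k x).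
Proof.
case=> size_x [_ [k sorted_k]]; case: (leqP k n) => [kn|nk]; first by exists k.
by exists 0; rewrite // rot0 -(@rot_oversize _ k x) // size_x ltnW.
Qed.

Lemma btree_cyclic_spread t0 n (x : seq Z) :
  0 < n -> Lambda n x -> {subset x <= btree_nodesZ t0} ->
  exists t a, size (btree_leaves t) = n * size (btree_leaves t0) /\
    forall i, i < n -> nth zeta x i \in btree_nodesZ t /\
      index (nth zeta x i) (btree_nodesZ t) =
        (i * size (btree_leaves t0) + a) %% (n * size (btree_leaves t0)).
Proof.
move=> n_gt0 x_Lambda x_t0; set G := size (btree_leaves t0).
have [k kn s_sorted] := Lambda_sorted_rot x_Lambda.
have size_x : size x = n by case: x_Lambda.
have s_t0 : {subset rot k x <= btree_nodesZ t0} by move=> z; rewrite mem_rot; apply: x_t0.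
have s_gt0 : 0 < size (rot k x) by rewrite size_rot size_x.
have [t [b [bG size_t index_t]]] := btree_spread s_sorted s_t0 s_gt0.
rewrite size_rot size_x -/G in size_t index_t.
exists t, ((n - k) * G + b); split=> // i i_n.
set j := (i + (n - k)) %% n.
have j_n : j < n by rewrite ltn_mod.
have -> : nth zeta x i = nth zeta (rot k x) j.
  rewrite nth_rot ?size_x // /j modnDml -addnA subnK // modnDr modn_small //.
have [-> ->] := index_t j j_n; split=> //.
have jGb : j * G + b < n * G.
  have : j.+1 * G <= n * G by rewrite leq_mul2r j_n orbT.
  rewrite mulSn; lia.
by rewrite -(modn_small jGb) /j muln_modl modnDml mulnDl addnA.
Qed.

Lemma modn_offset K m a b : 0 < K ->
  ((m + a) %% K + (b + (K - a %% K))) %% K = (m + b) %% K.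
Proof.
move=> K_gt0; rewrite modnDml.
have := ltn_pmod a K_gt0; have := divn_eq a K => a_eq a_lt.
have -> : m + a + (b + (K - a %% K)) = (a %/ K).+1 * K + (m + b) by rewrite mulSn; lia.
by rewrite modnMDl.
Qed.

Lemma tree_pair_btree tL tR : size (btree_leaves tL) = size (btree_leaves tR) ->
  tree_pair (btree_elems tL) (btree_elems tR).
Proof. by rewrite /tree_pair !leaves_btree; split; [|split]; try exact: is_tree_btree. Qed.

Theorem lemma3p8 (n : nat) (x y : seq Z) :
  Lambda n x -> Lambda n y ->
  exists (L R : seq word) (c : nat), tree_pair L R /\ map (iotaT L R c) x = y.
Proof.
move=> x_Lambda y_Lambda.
have [size_x size_y] : size x = n /\ size y = n by case: x_Lambda; case: y_Lambda.
have [t0 xy_t0] := btree_nodesZ_cover (x ++ y).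
case: (posnP n) => [n0|n_gt0].
  exists (btree_elems t0), (btree_elems t0), 0; split; first exact: tree_pair_btree.
  by move: size_x size_y; rewrite n0 => /size0nil-> /size0nil->.
have x_t0 : {subset x <= btree_nodesZ t0} by move=> z xz; rewrite xy_t0 // mem_cat xz.
have y_t0 : {subset y <= btree_nodesZ t0} by move=> z yz; rewrite xy_t0 // mem_cat yz orbT.
have [tL [a [size_L index_L]]] := btree_cyclic_spread n_gt0 x_Lambda x_t0.
have [tR [b [size_R index_R]]] := btree_cyclic_spread n_gt0 y_Lambda y_t0.
set K := n * size (btree_leaves t0) in size_L index_L size_R index_R.
have K_gt0 : 0 < K by rewrite muln_gt0 n_gt0 size_btree_leaves.
exists (btree_elems tL), (btree_elems tR), (b + (K - a %% K)).
split; first by apply: tree_pair_btree; rewrite size_L size_R.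
apply: (eq_from_nth (x0 := zeta)) => [|i]; first by rewrite size_map size_x size_y.
rewrite size_map size_x => i_n; rewrite (nth_map zeta) ?size_x //.
have [xL xi] := index_L i i_n; have [yR yi] := index_R i i_n.
by rewrite iotaT_btree ?size_L ?size_R // xi modn_offset // -yi nth_index.
Qed.
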